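(* Assume the standing setup below. For every integer $i$ with $0\le i\le s-2r+1$ and every $I\in\mathbb{P}_i(X)$, the linear form \[ \sum_{H\in \mathbb{P}_{i+2r}(X),\ I\subseteq H} L_H \] lies in the $\mathbb{F}_p$-linear span of $\{L_H : H\subseteq X,\ i\le |H|\le i+2r-1\}$.
   Context: Standing setup: $p$ is a prime; $K=\{k_1,\ldots,k_r\}$ and $L=\{l_1,\ldots,l_s\}$ are disjoint subsets of $\{0,1,\ldots,p-1\}$; $\mathcal{A}=\{A_1,\ldots,A_m\}$ is a family of distinct subsets of $[n]$ with $|A_i|\pmod p\in K$ for all $i$ and $|A_i\cap A_j|\pmod p\in L$ for all $i\ne j$. Let $X=[n-1]$. Associate a variable $x_i$ to each $A_i$, and for each $I\subseteq X$ define the linear form over $\mathbb{F}_p$: $L_I=\sum_{i:\ I\subseteq A_i} x_i$. For $j\ge0$, $\mathbb{P}_j(X)$ is the set of $j$-element subsets of $X$. *)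

From HB Require Import structures.
From mathcomp Require Import all_boot all_order all_algebra.
Set Implicit Arguments. Unset Strict Implicit. Unset Printing Implicit Defensive.
Import GRing.Theory.
Local Open Scope ring_scope.

(* Ground set [n] is encoded as 'I_n (element j+1 of [n] is ordinal j).
   X = [n-1] = first n-1 elements = ordinals j with j < n-1. *)
Definition Xset (n : nat) : {set 'I_n} := [set x : 'I_n | (val x < n.-1)%N].

(* The linear form L_I over F_p in variables x_1..x_m, as a row vector of
   coefficients: coefficient of x_i is 1 iff I \subset A_i. *)
Definition linform (p n m : nat) (A : 'I_m -> {set 'I_n}) (I : {set 'I_n})
  : 'rV['F_p]_m := \row_(i < m) (if I \subset A i then 1 else 0).

From HB Require Import structures.
From mathcomp Require Import all_boot all_order all_algebra.
From mathcomp Require Import ring zify.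

Set Implicit Arguments.
Unset Strict Implicit.
Unset Printing Implicit Defensive.
Import GRing.Theory.
Local Open Scope ring_scope.

(* Let [W_t] be the sum of the [L_H] over the [t]-element extensions [H] of
   [I] inside [X]; its [j]-th coordinate is ['C(|A_j :&: X| - i, t)] if
   [I \subset A_j] and [0] otherwise.  As [|A_j :&: X|] is [|A_j|] or
   [|A_j| - 1], the degree-[2 r] polynomial
   [\prod_(k in K) ('X - (k - i)) ('X - (k - 1 - i))] vanishes at
   [|A_j :&: X| - i] in ['F_p]; writing it in the binomial basis expresses
   [(2 r)! W_(2 r)] as a combination of [W_0, ..., W_(2 r - 1)], which lie in
   the span.  This needs [2 r < p].  Otherwise the disjointness of [K] and [L]
   forces [p = 2], [r = s = 1] and [i = 0], and then the forms [L_H] with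
   [|H| <= 1] already span everything. *)

Section BinomialBasis.
Context {F : fieldType}.

(* Coordinates of [\prod_(c <- cs) ('X - c)] in the binomial basis ['C('X, u)],
   computed from ['X * 'C('X, u) = u.+1 * 'C('X, u.+1) + u * 'C('X, u)]. *)
Definition binomial_coords (cs : seq F) : nat -> F :=
  foldr (fun c g u => u%:R * g u.-1 + (u%:R - c) * g u)
        (fun u => (u == 0%N)%:R) cs.

Lemma binomial_coords_gt cs u : (size cs < u)%N -> binomial_coords cs u = 0.
Proof.
elim: cs u => [|c cs IH] [|u] //= ltu.
by rewrite !IH ?mulr0 ?addr0 // ltnW.
Qed.

Lemma binomial_coords_size cs : binomial_coords cs (size cs) = (size cs)`!%:R.
Proof.
elim: cs => [|c cs IH] //=.
by rewrite IH binomial_coords_gt // mulr0 addr0 factS natrM.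
Qed.

Lemma mul_binS (y u : nat) : (u.+1 * 'C(y, u.+1) + u * 'C(y, u) = y * 'C(y, u))%N.
Proof.
rewrite mul_bin_left -mulnDl.
by case: (leqP u y) => [/subnK -> | /bin_small ->]; rewrite ?muln0.
Qed.

Lemma binomial_coords_expansion cs y N : (size cs < N)%N ->
  \sum_(u < N) binomial_coords cs u * 'C(y, u)%:R = \prod_(c <- cs) (y%:R - c).
Proof.
elim: cs N => [|c cs IH] [|N] //= ltN.
  by rewrite big_nil big_ord_recl /= bin0 mulr1 big1 ?addr0 // => u _; rewrite mul0r.
rewrite big_cons -(IH N) // mulr_sumr.
under eq_bigr do rewrite mulrDl.
rewrite big_split /= big_ord_recl /= !mul0r add0r big_ord_recr /=.
rewrite binomial_coords_gt // mulr0 mul0r addr0 -big_split /=.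
apply: eq_bigr => u _; rewrite /bump /= add1n add0n.
set g := binomial_coords cs u.
transitivity (g * (u.+1 * 'C(y, u.+1) + u * 'C(y, u))%N%:R - c * g * 'C(y, u)%:R : F).
  by rewrite natrD !natrM; ring.
by rewrite mul_binS natrM; ring.
Qed.

Lemma binomial_basis_relation (cs : seq F) : exists b : nat -> F, forall y : nat,
  \prod_(c <- cs) (y%:R - c) = 0 ->
  (size cs)`!%:R * 'C(y, size cs)%:R = \sum_(u < size cs) b u * 'C(y, u)%:R.
Proof.
exists (fun u => - binomial_coords cs u) => y root_y.
have := @binomial_coords_expansion cs y _ (ltnSn (size cs)).
rewrite root_y big_ord_recr /= binomial_coords_size => /eqP.
rewrite addrC addr_eq0 => /eqP ->; rewrite -sumrN.
by apply: eq_bigr => u _; rewrite mulNr.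
Qed.

End BinomialBasis.

Lemma prime_ndvd_fact p k : prime p -> (k < p)%N -> ~~ (p %| k`!)%N.
Proof.
move=> p_pr; elim: k => [_|k IH lt_kp]; first by rewrite fact0 dvdn1 neq_ltn prime_gt1 ?orbT.
rewrite factS Euclid_dvdM // negb_or IH 1?ltnW // andbT.
by rewrite gtnNdvd.
Qed.

Lemma card_layer_subset (T : finType) (X I B : {set T}) (t : nat) : I \subset X ->
  #|[set H : {set T} | [&& H \subset X, #|H| == (#|I| + t)%N & I \subset H] && (H \subset B)]|
  = if I \subset B then 'C(#|B :&: X| - #|I|, t) else 0%N.
Proof.
move=> sIX; case: ifP => sIB; last first.
  apply/eqP; rewrite cards_eq0; apply/eqP/setP => H; rewrite !inE.
  by apply/negbTE/andP => -[/and3P[_ _ /subset_trans sHB] /sHB]; rewrite sIB.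
set D := (B :&: X) :\: I.
have sIBX : I \subset B :&: X by rewrite subsetI sIB.
have -> : (#|B :&: X| - #|I| = #|D|)%N by rewrite cardsD (setIidPr sIBX).
rewrite -cards_draws.
have inj_addI : {in [set E : {set T} | E \subset D & #|E| == t] &, injective (fun E => E :|: I)}.
  move=> E1 E2; rewrite !inE => /andP[sE1 _] /andP[sE2 _] /setP eqE.
  apply/setP => x; have := eqE x; rewrite !inE.
  case: (boolP (x \in I)) => [xI _| _]; last by rewrite !orbF.
  by rewrite (contraNF (subsetP sE1 x) _) ?(contraNF (subsetP sE2 x) _) // !inE xI.
rewrite -(card_in_imset inj_addI); apply: eq_card => H; rewrite !inE.
apply/andP/imsetP => [[/and3P[sHX /eqP cardH sIH] sHB]|[E]].
  exists (H :\: I); last by rewrite setUC -{1}(setID H I) (setIidPr sIH).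
  rewrite inE setSD ?subsetI ?sHB //=.
  by rewrite cardsD (setIidPr sIH) cardH addKn.
rewrite inE => /andP[sED /eqP cardE] ->.
have /subsetP sDBX := subsetDl (B :&: X) I.
have [sEB sEX] : E \subset B /\ E \subset X.
  by split; apply/subsetP => x /(subsetP sED)/sDBX; rewrite inE => /andP[].
have disjEI : [disjoint E & I].
  by rewrite disjoints_subset (subset_trans sED) // /D setDE subsetIr.
rewrite !subUset sEX sIX sEB sIB subsetUr cardsU (disjoint_setI0 disjEI).
by rewrite cards0 subn0 cardE addnC eqxx.
Qed.

Lemma sum_indicator (T : finType) (R : pzSemiRingType) (P Q : pred T) :
  \sum_(x | P x) (if Q x then 1 else 0 : R) = #|[set x | P x && Q x]|%:R.
Proof. by rewrite -big_mkcondr -sumr_const; apply: eq_bigl => x; rewrite inE. Qed.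

Definition layer_sum (p : nat) {n m : nat} (A : 'I_m -> {set 'I_n})
    (X I : {set 'I_n}) (t : nat) : 'rV['F_p]_m :=
  \sum_(H : {set 'I_n} | [&& H \subset X, #|H| == (#|I| + t)%N & I \subset H])
    linform p A H.

Lemma layer_sum_coord p n m (A : 'I_m -> {set 'I_n}) (X I : {set 'I_n}) t j :
  I \subset X -> layer_sum p A X I t 0 j =
  if I \subset A j then 'C(#|A j :&: X| - #|I|, t)%:R else 0.
Proof.
move=> sIX; rewrite summxE; under eq_bigr do rewrite mxE.
by rewrite sum_indicator card_layer_subset //; case: ifP.
Qed.

Lemma layer_sum_mem_of_roots p n m (A : 'I_m -> {set 'I_n}) (X I : {set 'I_n})
    (cs : seq 'F_p) (U : {vspace 'rV['F_p]_m}) :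
  prime p -> (size cs < p)%N -> I \subset X ->
  (forall j, I \subset A j -> \prod_(c <- cs) ((#|A j :&: X| - #|I|)%:R - c) = 0) ->
  (forall u, (u < size cs)%N -> layer_sum p A X I u \in U) ->
  layer_sum p A X I (size cs) \in U.
Proof.
move=> p_pr lt_cs_p sIX roots lowerU.
have [b rel] := binomial_basis_relation cs.
have fact_neq0 : (size cs)`!%:R != 0 :> 'F_p.
  by rewrite -(dvdn_pcharf (pchar_Fp p_pr)) prime_ndvd_fact.
suff -> : layer_sum p A X I (size cs) =
    ((size cs)`!%:R)^-1 *: \sum_(u < size cs) b u *: layer_sum p A X I u.
  by rewrite rpredZ // rpred_sum // => u _; rewrite rpredZ ?lowerU.
apply/rowP => j; rewrite layer_sum_coord // mxE summxE.
under eq_bigr do rewrite mxE layer_sum_coord //.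
case: ifP => sIA; last by rewrite big1 ?mulr0 // => u _; rewrite mulr0.
by rewrite -rel ?roots // mulrA mulVf // mul1r.
Qed.

Definition shifted_residues {p : nat} (K : {set 'I_p}) (i : nat) : seq 'F_p :=
  flatten [seq [:: (val k)%:R - i%:R; (val k)%:R - 1 - i%:R] | k <- enum K].

Lemma size_shifted_residues p (K : {set 'I_p}) i :
  size (shifted_residues K i) = (2 * #|K|)%N.
Proof. by rewrite /shifted_residues cardE; elim: (enum K) => //= k ks ->; lia. Qed.

Lemma shifted_residues_root p (T : finType) (K : {set 'I_p}) (k : 'I_p)
    (B X : {set T}) (i : nat) :
  prime p -> k \in K -> val k = (#|B| %% p)%N -> (#|B :\: X| <= 1)%N ->
  (i <= #|B :&: X|)%N ->
  \prod_(c <- shifted_residues K i) ((#|B :&: X| - i)%:R - c) = 0.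
Proof.
move=> p_pr kK hk le1 le_i.
have cardB : #|B :&: X|%:R + #|B :\: X|%:R = (val k)%:R :> 'F_p.
  by rewrite -natrD cardsID hk Fp_nat_mod.
have in_residues c : c \in [:: (val k)%:R - i%:R; (val k)%:R - 1 - i%:R] ->
    c \in shifted_residues K i.
  by move=> c_in; apply/flatten_mapP; exists k; rewrite ?mem_enum.
apply/eqP; rewrite prodf_seq_eq0; apply/hasP.
move: le1 cardB; rewrite leq_eqVlt ltnS leqn0 => /orP[] /eqP -> cardB.
- exists ((val k)%:R - 1 - i%:R); first by rewrite in_residues // !inE eqxx orbT.
  by rewrite /= natrB // -cardB; apply/eqP; ring.
- exists ((val k)%:R - i%:R); first by rewrite in_residues // !inE eqxx.
  by rewrite /= natrB // -cardB; apply/eqP; ring.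
Qed.

Lemma linform_set0 p n m (A : 'I_m -> {set 'I_n}) : linform p A set0 = const_mx 1.
Proof. by apply/rowP => j; rewrite !mxE sub0set. Qed.

Lemma sum_linform_set1 p n m (A : 'I_m -> {set 'I_n}) (C : {set 'I_n}) :
  \sum_(x in C) linform p A [set x] = \row_j #|A j :&: C|%:R.
Proof.
apply/rowP => j; rewrite summxE !mxE; under eq_bigr do rewrite mxE sub1set.
by rewrite sum_indicator; congr _%:R; apply: eq_card => x; rewrite !inE andbC.
Qed.

Lemma cardsI_in_le1 (T : finType) (Y S U : {set T}) : (#|Y| <= 1)%N ->
  S \subset Y -> U \subset Y -> #|S :&: U| = (#|S| * #|U|)%N.
Proof.
move=> small_Y sSY sUY.
have empty_or_full (Z : {set T}) : Z \subset Y -> Z = set0 \/ Z = Y.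
  move=> sZY; have [->|[x xZ]] := set_0Vmem Z; [by left | right].
  apply/eqP; rewrite eqEcard sZY (leq_trans small_Y) // card_gt0.
  by apply/set0Pn; exists x.
case: (empty_or_full S sSY) => ->; first by rewrite set0I !cards0.
case: (empty_or_full U sUY) => ->; first by rewrite setI0 !cards0 muln0.
by rewrite setIid; move: small_Y; rewrite leq_eqVlt ltnS leqn0 => /orP[] /eqP ->.
Qed.

Lemma card_setD_le1 (T : finType) (X B : {set T}) :
  (#|~: X| <= 1)%N -> (#|B :\: X| <= 1)%N.
Proof. by apply: leq_trans; rewrite subset_leq_card // subsetDr. Qed.

Section SmallLayers.
Variables (p n m : nat) (A : 'I_m -> {set 'I_n}) (X : {set 'I_n}) (a b : 'F_p).
Hypotheses (small_coX : (#|~: X| <= 1)%N) (a_neq_b : a != b).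
Hypothesis card_A : forall j, #|A j|%:R = a.
Hypothesis card_meet_A : forall j l, j != l -> #|A j :&: A l|%:R = b.

Let outside : 'rV['F_p]_m := \row_j #|A j :\: X|%:R.

Lemma outside_idem l : outside 0 l * outside 0 l = outside 0 l.
Proof.
rewrite mxE; have := card_setD_le1 (A l) small_coX.
by rewrite leq_eqVlt ltnS leqn0 => /orP[] /eqP ->; rewrite ?mul1r ?mul0r.
Qed.

Lemma card_meet_in_X l : \row_j #|A j :&: (A l :&: X)|%:R =
  b *: const_mx 1 + ((a - b) *: delta_mx 0 l - outside 0 l *: outside).
Proof.
apply/rowP => j; rewrite !mxE eqxx /=.
have /eqP := congr1 (fun k => k%:R : 'F_p) (cardsID X (A j :&: A l)).
rewrite natrD setDIl (cardsI_in_le1 small_coX (subsetDr _ _) (subsetDr _ _)) natrM.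
move/eqP; rewrite setIA; have [->|neq_jl] := eqVneq j l.
  by rewrite setIid card_A mulr1 => <- /=; ring.
by rewrite card_meet_A // => <- /=; ring.
Qed.

(* The vectors [\sum_(x in A_l :&: X) L_[set x]] are the columns of
   [b J + (a - b) 1 - w w^T] with [w := outside]; as [w] is [0/1]-valued, [J]
   and [w] can be eliminated in turn, leaving the unit vectors. *)
Lemma small_layers_span (U : {vspace 'rV['F_p]_m}) :
  (forall H : {set 'I_n}, H \subset X -> (#|H| <= 1)%N -> linform p A H \in U) ->
  forall v, v \in U.
Proof.
move=> smallU v; set d := a - b.
have d_neq0 : d != 0 by rewrite subr_eq0.
have oneU : const_mx 1 \in U by rewrite -(@linform_set0 p _ _ A) smallU ?sub0set ?cards0.
have sum_delta : \sum_l delta_mx 0 l = const_mx 1 :> 'rV['F_p]_m.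
  by rewrite [RHS]row_sum_delta; apply: eq_bigr => l _; rewrite mxE scale1r.
have diffU l : d *: delta_mx 0 l - outside 0 l *: outside \in U.
  rewrite -(addKr (b *: const_mx 1) (_ - _)) -card_meet_in_X -sum_linform_set1.
  rewrite rpredD ?rpredN ?rpredZ ?rpred_sum // => x; rewrite inE => /andP[_ xX].
  by rewrite smallU ?sub1set ?cards1.
set S := \sum_l outside 0 l.
have S_outsideU : S *: outside \in U.
  have : d *: const_mx 1 - \sum_l (d *: delta_mx 0 l - outside 0 l *: outside) \in U.
    by rewrite rpredB ?rpredZ ?rpred_sum.
  by rewrite sumrB -scaler_sumr sum_delta -scaler_suml opprB addrC addrNK.
have d_outsideU : d *: outside \in U.
  have : \sum_l outside 0 l *: (d *: delta_mx 0 l - outside 0 l *: outside) \in U.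
    by rewrite rpred_sum // => l _; rewrite rpredZ.
  under eq_bigr do rewrite scalerBr !scalerA outside_idem mulrC -scalerA.
  by rewrite sumrB -scaler_sumr -row_sum_delta -scaler_suml rpredBr.
have outsideU : outside \in U.
  by rewrite -[outside]scale1r -(mulVf d_neq0) -scalerA rpredZ.
have deltaU l : delta_mx 0 l \in U.
  rewrite -[delta_mx _ _]scale1r -(mulVf d_neq0) -scalerA rpredZ //.
  by rewrite -[d *: _](subrK (outside 0 l *: outside)) rpredD ?rpredZ.
by rewrite (row_sum_delta v) rpred_sum // => l _; rewrite rpredZ.
Qed.

End SmallLayers.

Lemma card_setC_Xset n : (#|~: Xset n| <= 1)%N.
Proof.
apply/card_le1_eqP => x y; rewrite !inE -!leqNgt => le_x le_y.
apply/val_inj; move: (ltn_ord x) (ltn_ord y) le_x le_y.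
by case: n x y => [[]|n] //= x y; lia.
Qed.

Lemma natr_Fp_ord_inj p (k l : 'I_p) : prime p ->
  ((val k)%:R == (val l)%:R :> 'F_p) = (k == l).
Proof.
move=> p_pr; apply/eqP/eqP => [eq_kl|-> //]; apply/val_inj.
by have := congr1 val eq_kl; rewrite /= !val_Fp_nat // !modn_small.
Qed.

Lemma natr_Fp_residue p (K : {set 'I_p}) (k0 : 'I_p) (x : nat) : prime p ->
  K = [set k0] -> [exists k in K, val k == (x %% p)%N] -> x%:R = (val k0)%:R :> 'F_p.
Proof. by move=> p_pr -> /existsP[k /andP[/set1P -> /eqP ->]]; rewrite Fp_nat_mod. Qed.

Lemma degenerate_parameters p (K L : {set 'I_p}) i : prime p -> [disjoint K & L] ->
  (p <= 2 * #|K|)%N -> (i + 2 * #|K| <= #|L| + 1)%N ->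
  [/\ i = 0%N, #|K| = 1%N & #|L| = 1%N].
Proof.
move=> p_pr disKL ge_p hi; have := prime_gt1 p_pr.
have := max_card (mem (K :|: L)).
rewrite card_ord cardsU (disjoint_setI0 disKL) cards0 subn0.
by move=> le_p gt1_p; split; lia.
Qed.

Theorem mainTheorem4 (p n m : nat) (hp : prime p) (K L : {set 'I_p})
  (A : 'I_m -> {set 'I_n})
  (hKL : [disjoint K & L])
  (hA_inj : injective A)
  (hK : forall i, [exists k in K, val k == (#|A i| %% p)%N])
  (hL : forall i j, i != j -> [exists l in L, val l == (#|A i :&: A j| %% p)%N])
  (i : nat) (hi : (i + 2 * #|K| <= #|L| + 1)%N)
  (I : {set 'I_n}) (hI : I \subset Xset n) (hIc : #|I| = i) :
  (\sum_(H : {set 'I_n} | [&& H \subset Xset n, #|H| == (i + 2 * #|K|)%N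
                            & I \subset H]) linform p A H)
  \in <<[seq linform p A H | H <- enum [set H : {set 'I_n} |
          [&& H \subset Xset n, (i <= #|H|)%N & (#|H| < i + 2 * #|K|)%N]]]>>%VS.
Proof.
set V := <<_>>%VS.
have genV (H : {set 'I_n}) : H \subset Xset n -> (i <= #|H|)%N -> (#|H| < i + 2 * #|K|)%N ->
    linform p A H \in V.
  by move=> sHX le_iH lt_H; apply/memv_span/map_f; rewrite mem_enum inE sHX le_iH.
have layerV t : (t < 2 * #|K|)%N -> layer_sum p A (Xset n) I t \in V.
  move=> lt_t; apply: rpred_sum => H /and3P[sHX /eqP cardH _].
  by rewrite genV // cardH hIc ?leq_addr ?ltn_add2l.
rewrite -hIc -/(layer_sum p A (Xset n) I (2 * #|K|)).
have [lt_p | ge_p] := ltnP (2 * #|K|) p.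
  rewrite -(size_shifted_residues K i); apply: layer_sum_mem_of_roots => //.
  - by rewrite size_shifted_residues.
  - move=> j sIA; have /existsP[k /andP[kK /eqP hk]] := hK j.
    rewrite hIc (shifted_residues_root hp kK hk) ?card_setD_le1 ?card_setC_Xset //.
    by rewrite -hIc subset_leq_card // subsetI sIA hI.
  - by move=> u; rewrite size_shifted_residues; apply: layerV.
have [i0 /eqP/cards1P[k0 K1] /eqP/cards1P[l0 L1]] :=
  degenerate_parameters hp hKL ge_p hi.
apply: (@small_layers_span _ _ _ A (Xset n) (val k0)%:R (val l0)%:R).
- exact: card_setC_Xset.
- rewrite natr_Fp_ord_inj //; apply/eqP => eq_kl; move: hKL.
  by rewrite K1 L1 eq_kl disjoints1 in_set1 eqxx.
- by move=> j; apply: natr_Fp_residue hp K1 (hK j).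
- by move=> j l neq_jl; apply: natr_Fp_residue hp L1 (hL j l neq_jl).
- by move=> H sHX le1; apply: genV; rewrite // i0 ?K1 ?cards1.
Qed.
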